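(* Let $\hat J$, $\hat\Delta_{\mathbf u,\mathbf v}$, $\hat\phi^+_{\mathbf u}$, $\hat\phi^-_{\mathbf u}$ be as in the context, and let the suboptimal policy be $\hat\mu^*(\mathbf Q)\in\arg\min_{\mathbf u\in\mathcal U}\hat J(\mathbf Q,\mathbf u)$. Then: (1) Let $\mathbf 0\in\mathcal U$ be the all-zero action and $\hat{\mathcal Q}_0=\{\mathbf Q\in\mathcal Q: Q_{n,m}\le\hat\phi^+_{\mathbf 0}(\mathbf Q_{-n,-m})\ \forall n\in\mathcal N,\ m\in\mathcal M_n\}$. For every $\mathbf Q\in\hat{\mathcal Q}_0$, $\hat\Delta_{\mathbf 0,\mathbf v}(\mathbf Q)\le0$ for all $\mathbf v\in\mathcal U$, so $\mathbf 0\in\arg\min_{\mathbf u}\hat J(\mathbf Q,\mathbf u)$. (2) Let $\mathbf u\in\mathcal U$ with $u_n=m\in\mathcal M_n$ for some $n\in\mathcal N$. Then for every $\mathbf Q\in\mathcal Q$ with $Q_{n,m}\ge\hat\phi^-_{\mathbf u}(\mathbf Q_{-n,-m})$ we have $\hat\Delta_{\mathbf u,\mathbf v}(\mathbf Q)\le0$ for all $\mathbf v\in\mathcal U$, so $\mathbf u\in\arg\min_{\mathbf v}\hat J(\mathbf Q,\mathbf v)$. Moreover, if $u_0=m\in\mathcal M_0$, then $\hat\phi^-_{\mathbf u}(\mathbf Q_{-0,-m})$ is monotonically non-increasing in $Q_{n,m}$ for every $n\in\mathcal N_m$.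
   Context: Model. Let $N\ge 1$, $\mathcal N=\{0,1,\dots,N\}$ (base station $0$ is the macro base station, MBS) and $\mathcal N^+=\{1,\dots,N\}$ (small base stations, SBSs). Let $\mathcal M=\{1,\dots,M\}$ be the set of contents. For each $n\in\mathcal N$ let $\mathcal M_n\subseteq\mathcal M$ be the set of contents cached at BS $n$, with $\mathcal M_0=\mathcal M$; put $\tilde{\mathcal M}_n=\mathcal M_n\cup\{0\}$ and $\mathcal N_m=\{n\in\mathcal N^+: m\in\mathcal M_n\}$. Powers $p(n,m)\ge 0$ are given for $n\in\mathcal N$, $m\in\mathcal M_n$, and $p(n,0)=0$. A weight $w\ge 0$ is fixed. The feasible action space is $\mathcal U=\{\mathbf u=(u_n)_{n\in\mathcal N}: u_n\in\tilde{\mathcal M}_n\ \forall n,\ u_0\sum_{n\in\mathcal N^+}u_n=0\}$. A state is $\mathbf Q=(Q_{n,m})_{n\in\mathcal N,m\in\mathcal M_n}$ with $Q_{n,m}\in\mathcal Q_{n,m}=\{0,1,\dots,N_{n,m}\}$ for given positive integers $N_{n,m}$; $\mathcal Q=\prod_{n\in\mathcal N}\prod_{m\in\mathcal M_n}\mathcal Q_{n,m}$. Arrivals $A_{n,m}$ ($n\in\mathcal N$, $m\in\mathcal M$) are mutually independent nonnegative-integer random variables with fixed distributions, i.i.d. across time slots; $\tilde A_{0,m}=A_{0,m}+\sum_{n\in\mathcal N^+\setminus\mathcal N_m}A_{n,m}$. Given state $\mathbf Q$ and action $\mathbf u$, the next state $\mathbf Q'$ is $Q'_{0,m}=\min\{\mathbf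 1(u_0\neq m)Q_{0,m}+\tilde A_{0,m},N_{0,m}\}$ for $m\in\mathcal M_0$ and $Q'_{n,m}=\min\{\mathbf 1(u_0\neq m\text{ and }u_n\neq m)Q_{n,m}+A_{n,m},N_{n,m}\}$ for $n\in\mathcal N^+$, $m\in\mathcal M_n$; $\mathbb E$ denotes expectation over the arrivals. The per-stage cost is $g(\mathbf Q,\mathbf u)=d(\mathbf Q)+w\,p(\mathbf u)$ with $d(\mathbf Q)=\sum_{n\in\mathcal N}\sum_{m\in\mathcal M_n}Q_{n,m}$ and $p(\mathbf u)=\sum_{n\in\mathcal N}p(n,u_n)$. Per-BS-content value functions. Let $\hat\mu$ be a randomized base policy: a fixed probability distribution on $\mathcal U$ from which the action is drawn each slot independently of state and arrivals; $\mathbb E^{\hat\mu}$ is expectation over $\mathbf u\sim\hat\mu$. For $n\in\mathcal N$, $m\in\mathcal M_n$ let $g_{n,m}(Q_{n,m},\mathbf u)=Q_{n,m}+w\mathbf 1(u_n=m)p(n,m)$ and $\Pr[Q'_{n,m}\mid Q_{n,m},\mathbf u]$ the transition probability of the $(n,m)$ component. Fix $Q^\dagger_{n,m}\in\mathcal Q_{n,m}$; define $\hat V^0_{n,m}\equiv0$, $\hat J^{l+1}_{n,m}(Q_{n,m})=\mathbb E^{\hat\mu}[g_{n,m}(Q_{n,m},\mathbf u)]+\sum_{Q'_{n,m}}\mathbb E^{\hat\mu}[\Pr[Q'_{n,m}\mid Q_{n,m},\mathbf u]]\hat V^l_{n,m}(Q'_{n,m})$, and $\hat V^{l+1}_{n,m}(Q_{n,m})=\hat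 J^{l+1}_{n,m}(Q_{n,m})-\hat J^{l+1}_{n,m}(Q^\dagger_{n,m})$. It is assumed that $\hat V^l_{n,m}\to\hat V_{n,m}$ pointwise; $\hat V_{n,m}$ then solves the per-BS-content fixed-point equation $\hat\theta_{n,m}+\hat V_{n,m}(Q_{n,m})=\mathbb E^{\hat\mu}[g_{n,m}(Q_{n,m},\mathbf u)]+\sum_{Q'_{n,m}}\mathbb E^{\hat\mu}[\Pr[Q'_{n,m}\mid Q_{n,m},\mathbf u]]\hat V_{n,m}(Q'_{n,m})$. Further notation. $\hat J(\mathbf Q,\mathbf u)=g(\mathbf Q,\mathbf u)+\sum_{n\in\mathcal N}\sum_{m\in\mathcal M_n}\mathbb E[\hat V_{n,m}(Q'_{n,m})]$ where $\mathbf Q'$ is the next state from $(\mathbf Q,\mathbf u)$; $\hat\Delta_{\mathbf u,\mathbf v}(\mathbf Q)=\hat J(\mathbf Q,\mathbf u)-\hat J(\mathbf Q,\mathbf v)$. For $(n,m)$ with $m\in\mathcal M_n$, $\mathbf Q_{-n,-m}=(Q_{i,j})_{(i,j)\neq(n,m)}$. Define $\hat\Phi_{\mathbf u}(\mathbf Q_{-n,-m})=\{Q_{n,m}\in\mathcal Q_{n,m}:\hat\Delta_{\mathbf u,\mathbf v}(Q_{n,m},\mathbf Q_{-n,-m})\le0\ \forall\mathbf v\in\mathcal U,\ \mathbf v\neq\mathbf u\}$, $\hat\phi^+_{\mathbf u}(\mathbf Q_{-n,-m})=\max\hat\Phi_{\mathbf u}(\mathbf Q_{-n,-m})$ if nonempty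 and $-\infty$ otherwise, $\hat\phi^-_{\mathbf u}(\mathbf Q_{-n,-m})=\min\hat\Phi_{\mathbf u}(\mathbf Q_{-n,-m})$ if nonempty and $+\infty$ otherwise. *)

From Stdlib Require Import Reals Arith List Bool ClassicalEpsilon.
Open Scope R_scope.

Fixpoint rsum (n : nat) (f : nat -> R) : R :=
  match n with O => 0 | S k => rsum k f + f k end.

Definition conv (p q : nat -> R) (k : nat) : R :=
  rsum (S k) (fun i => p i * q (k - i)%nat).

(* law of min(c + A, K) where A has pmf p (and c <= K):
   P[min(c+A,K) = q'] *)
Definition trunc_law (p : nat -> R) (c K q' : nat) : R :=
  if Nat.ltb q' K then (if Nat.leb c q' then p (q' - c)%nat else 0)
  else if Nat.eqb q' K then 1 - rsum (K - c)%nat p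
  else 0.

Definition decP (P : Prop) : bool :=
  if excluded_middle_informative P then true else false.

(* max of {x <= k | P x}; None encodes -infinity (empty set) *)
Fixpoint find_max (P : nat -> Prop) (k : nat) : option nat :=
  match k with
  | O => if decP (P O) then Some O else None
  | S k' => if decP (P (S k')) then Some (S k') else find_max P k'
  end.

Fixpoint find_min_aux (P : nat -> Prop) (i fuel : nat) : option nat :=
  match fuel with
  | O => None
  | S f => if decP (P i) then Some i else find_min_aux P (S i) f
  end.
(* min of {x <= k | P x}; None encodes +infinity (empty set) *)
Definition find_min (P : nat -> Prop) (k : nat) : option nat :=
  find_min_aux P O (S k).

(* q <= phi, with None = -infinity *)
Definition le_ninf (q : nat) (o : option nat) : Prop :=
  match o with None => False | Some x => (q <= x)%nat end.
(* phi <= q, with None = +infinity *)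
Definition ge_pinf (q : nat) (o : option nat) : Prop :=
  match o with None => False | Some x => (x <= q)%nat end.
(* order on nat u {+infinity} (None = +infinity) *)
Definition le_pinf (a b : option nat) : Prop :=
  match a, b with
  | _, None => True
  | None, Some _ => False
  | Some x, Some y => (x <= y)%nat
  end.

Record Model := {
  NB : nat;                                (* N : SBSs are 1..N, MBS is 0 *)
  NB_pos : (1 <= NB)%nat;
  MC : nat;                                (* M : contents are 1..M *)
  cache : nat -> nat -> bool;              (* cache n m  <->  m \in M_n *)
  cache_range : forall n m, cache n m = true -> (1 <= m <= MC)%nat;
  cache_MBS : forall m, cache 0 m = true <-> (1 <= m <= MC)%nat;
  pw : nat -> nat -> R;
  pw_nonneg : forall n m, (n <= NB)%nat -> cache n m = true -> 0 <= pw n m;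
  wt : R;
  wt_nonneg : 0 <= wt;
  cap : nat -> nat -> nat;
  cap_pos : forall n m, (n <= NB)%nat -> cache n m = true -> (0 < cap n m)%nat;
  arr : nat -> nat -> nat -> R;            (* arr n m k = P[A_{n,m} = k] *)
  arr_nonneg : forall n m k, (n <= NB)%nat -> (1 <= m <= MC)%nat -> 0 <= arr n m k;
  arr_sum1 : forall n m, (n <= NB)%nat -> (1 <= m <= MC)%nat -> infinite_sum (arr n m) 1
}.

Section Defs.
Variable Mdl : Model.

Definition natsum (f : nat -> nat) (a len : nat) : nat :=
  fold_right plus O (map f (seq a len)).

(* feasible action space U; actions are u : nat -> nat with u n = u_n,
   u n = 0 outside 0..N *)
Definition inU (u : nat -> nat) : Prop :=
  (forall n, (n <= NB Mdl)%nat -> u n = O \/ cache Mdl n (u n) = true) /\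
  (forall n, (NB Mdl < n)%nat -> u n = O) /\
  (u O * natsum u 1 (NB Mdl))%nat = O.

Definition zero_action : nat -> nat := fun _ => O.

(* state space: Q n m for n in 0..N, m in M_n *)
Definition validQ (Q : nat -> nat -> nat) : Prop :=
  forall n m, (n <= NB Mdl)%nat -> cache Mdl n m = true -> (Q n m <= cap Mdl n m)%nat.

(* pmf of tilde A_{0,m} = A_{0,m} + sum_{n in N^+ \ N_m} A_{n,m} (independent) *)
Definition tildeA (m : nat) : nat -> R :=
  fold_left (fun acc n => if cache Mdl n m then acc else conv acc (arr Mdl n m))
            (seq 1 (NB Mdl)) (arr Mdl O m).

Definition arrlaw (n m : nat) : nat -> R :=
  if Nat.eqb n O then tildeA m else arr Mdl n m.

Definition served (u : nat -> nat) (n m : nat) : bool :=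
  orb (Nat.eqb (u O) m) (andb (negb (Nat.eqb n O)) (Nat.eqb (u n) m)).

(* Pr[Q'_{n,m} = q' | Q_{n,m} = q, u] *)
Definition trP (n m q : nat) (u : nat -> nat) (q' : nat) : R :=
  trunc_law (arrlaw n m) (if served u n m then O else q) (cap Mdl n m) q'.

Definition sumDom (f : nat -> nat -> R) : R :=
  rsum (S (NB Mdl)) (fun n => rsum (S (MC Mdl)) (fun m =>
    if cache Mdl n m then f n m else 0)).

Definition dQ (Q : nat -> nat -> nat) : R := sumDom (fun n m => INR (Q n m)).

Definition pact (n k : nat) : R := if Nat.eqb k O then 0 else pw Mdl n k.
Definition pu (u : nat -> nat) : R := rsum (S (NB Mdl)) (fun n => pact n (u n)).

Definition gcost (Q : nat -> nat -> nat) (u : nat -> nat) : R :=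
  dQ Q + wt Mdl * pu u.

Definition gnm (n m q : nat) (u : nat -> nat) : R :=
  INR q + wt Mdl * (if Nat.eqb (u n) m then pw Mdl n m else 0).

(* randomized base policy: finite list of (probability, action) *)
Definition Emu (mu : list (R * (nat -> nat))) (f : (nat -> nat) -> R) : R :=
  fold_right Rplus 0 (map (fun p => fst p * f (snd p)) mu).

Definition is_base_policy (mu : list (R * (nat -> nat))) : Prop :=
  Forall (fun p => 0 <= fst p /\ inU (snd p)) mu /\
  fold_right Rplus 0 (map fst mu) = 1.

Definition Jnext (mu : list (R * (nat -> nat))) (Vprev : nat -> nat -> nat -> R)
  (n m q : nat) : R :=
  Emu mu (gnm n m q) +
  rsum (S (cap Mdl n m)) (fun q' => Emu mu (fun u => trP n m q u q') * Vprev n m q').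

Fixpoint Vit (mu : list (R * (nat -> nat))) (Qdag : nat -> nat -> nat) (l : nat)
  : nat -> nat -> nat -> R :=
  match l with
  | O => fun _ _ _ => 0
  | S l' => fun n m q =>
      Jnext mu (Vit mu Qdag l') n m q - Jnext mu (Vit mu Qdag l') n m (Qdag n m)
  end.

Definition Jhat (Vhat : nat -> nat -> nat -> R) (Q : nat -> nat -> nat) (u : nat -> nat) : R :=
  gcost Q u +
  sumDom (fun n m => rsum (S (cap Mdl n m)) (fun q' => trP n m (Q n m) u q' * Vhat n m q')).

Definition Deltahat Vhat (u v : nat -> nat) Q : R := Jhat Vhat Q u - Jhat Vhat Q v.

(* Q with entry (n,m) replaced by x : the state (x, Q_{-n,-m}) *)
Definition upd (Q : nat -> nat -> nat) (n m x : nat) : nat -> nat -> nat :=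
  fun i j => if andb (Nat.eqb i n) (Nat.eqb j m) then x else Q i j.

(* hat Phi_u(Q_{-n,-m}) (depends on Q only through Q_{-n,-m}) *)
Definition PhiSet Vhat (u : nat -> nat) Q (n m x : nat) : Prop :=
  (x <= cap Mdl n m)%nat /\
  forall v, inU v -> v <> u -> Deltahat Vhat u v (upd Q n m x) <= 0.

Definition phi_plus Vhat u Q n m : option nat :=
  find_max (PhiSet Vhat u Q n m) (cap Mdl n m).
Definition phi_minus Vhat u Q n m : option nat :=
  find_min (PhiSet Vhat u Q n m) (cap Mdl n m).

End Defs.

(* For a truncated queue with arrivals of pmf p, the expectation
   E[V(min(c + A, K))] is non-decreasing in the starting level c whenever V is.
   Hence every iterate of the relative value iteration, and its limit V^, is
   non-decreasing in the queue length.  In J^(Q, u) the coordinate Q_{n,m}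
   enters only through Q_{n,m} itself (the same for every action) and through
   E[V^_{n,m}(Q'_{n,m})], which does not depend on Q_{n,m} when u serves
   (n, m).  So if u serves (n, m), raising Q_{n,m} can only lower
   Delta_{u,v}: this gives part (2) from the state at phi^-, part (1) (read as
   Delta_{0,v} = -Delta_{v,0} for a coordinate served by v) from the state at
   phi^+, and the monotonicity of phi^-, since u_0 = m serves (n, m) for every
   n. *)
From Stdlib Require Import Reals Arith List ClassicalEpsilon.
From Stdlib Require Import Lia Lra FunctionalExtensionality Classical.
Open Scope R_scope.

Lemma rsum_ext N f g : (forall i, (i < N)%nat -> f i = g i) -> rsum N f = rsum N g.
Proof.
  induction N as [|N IH]; intros H; simpl; [reflexivity|].
  rewrite H, IH by (lia || (intros; apply H; lia)). reflexivity.
Qed.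

Lemma rsum_le N f g : (forall i, (i < N)%nat -> f i <= g i) -> rsum N f <= rsum N g.
Proof.
  induction N as [|N IH]; intros H; simpl; [lra|].
  assert (f N <= g N) by (apply H; lia).
  assert (rsum N f <= rsum N g) by (apply IH; intros; apply H; lia).
  lra.
Qed.

Lemma rsum_nonneg N f : (forall i, (i < N)%nat -> 0 <= f i) -> 0 <= rsum N f.
Proof.
  induction N as [|N IH]; intros H; simpl; [lra|].
  assert (0 <= f N) by (apply H; lia).
  assert (0 <= rsum N f) by (apply IH; intros; apply H; lia).
  lra.
Qed.

Lemma rsum_plus N f g : rsum N (fun i => f i + g i) = rsum N f + rsum N g.
Proof. induction N as [|N IH]; simpl; [lra|]. rewrite IH; ring. Qed.

Lemma rsum_scal N c f : rsum N (fun i => c * f i) = c * rsum N f.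
Proof. induction N as [|N IH]; simpl; [lra|]. rewrite IH; ring. Qed.

Lemma rsum_update N f g k : (k < N)%nat -> (forall i, i <> k -> g i = f i) ->
  rsum N g = rsum N f + (g k - f k).
Proof.
  induction N as [|N IH]; intros Hk H; [lia|]. simpl.
  destruct (Nat.eq_dec k N) as [->|Hne].
  - rewrite (rsum_ext N g f) by (intros; apply H; lia). ring.
  - rewrite IH, (H N) by (auto; lia). ring.
Qed.

Lemma rsum_shift c j h :
  rsum (c + j) (fun q => if Nat.leb c q then h (q - c)%nat else 0) = rsum j h.
Proof.
  induction j as [|j IH].
  - rewrite Nat.add_0_r. transitivity (rsum c (fun _ => 0)).
    + apply rsum_ext. intros i Hi. destruct (Nat.leb_spec c i); [lia|reflexivity].
    + simpl. clear. induction c as [|c IH]; simpl; lra.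
  - rewrite Nat.add_succ_r. simpl. rewrite IH.
    destruct (Nat.leb_spec c (c + j)); [|lia].
    replace (c + j - c)%nat with j by lia. reflexivity.
Qed.

Definition trunc_mean (p V : nat -> R) (K c : nat) : R :=
  rsum (S K) (fun q' => trunc_law p c K q' * V q').

Lemma trunc_meanE p V K c : (c <= K)%nat ->
  trunc_mean p V K c = V K + rsum (K - c) (fun i => p i * (V (c + i)%nat - V K)).
Proof.
  intros Hc. unfold trunc_mean. simpl.
  rewrite (rsum_ext K _
    (fun q => if Nat.leb c q then (fun i => p i * V (c + i)%nat) (q - c)%nat else 0)).
  2:{ intros i Hi. unfold trunc_law.
      destruct (Nat.ltb_spec i K); [|lia].
      destruct (Nat.leb_spec c i); [|ring].
      replace (c + (i - c))%nat with i by lia. reflexivity. }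
  replace (rsum K _) with (rsum (K - c) (fun i => p i * V (c + i)%nat))
    by (rewrite <- (rsum_shift c), Nat.add_comm, Nat.sub_add by lia; reflexivity).
  unfold trunc_law. rewrite Nat.ltb_irrefl, Nat.eqb_refl.
  rewrite (rsum_ext _ (fun i => p i * (V (c + i)%nat - V K))
                      (fun i => p i * V (c + i)%nat + - V K * p i)) by (intros; ring).
  rewrite rsum_plus, rsum_scal. ring.
Qed.

Section TruncMeanMonotone.
Variables (p V : nat -> R) (K : nat).
Hypothesis p_nonneg : forall i, 0 <= p i.
Hypothesis V_mono : forall a b, (a <= b <= K)%nat -> V a <= V b.

Lemma trunc_mean_le_succ c : (S c <= K)%nat -> trunc_mean p V K c <= trunc_mean p V K (S c).
Proof.
  intros Hc. rewrite !trunc_meanE by lia.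
  replace (K - c)%nat with (S (K - S c)) by lia. simpl.
  set (j := (K - S c)%nat).
  assert (rsum j (fun i => p i * (V (c + i)%nat - V K))
          <= rsum j (fun i => p i * (V (S (c + i)) - V K))).
  { apply rsum_le. intros i Hi. apply Rmult_le_compat_l; [apply p_nonneg|].
    assert (V (c + i)%nat <= V (S (c + i))) by (apply V_mono; unfold j in Hi; lia). lra. }
  assert (p j * (V (c + j)%nat - V K) <= 0).
  { assert (V (c + j)%nat <= V K) by (apply V_mono; unfold j; lia).
    pose proof (p_nonneg j). nra. }
  lra.
Qed.

Lemma trunc_mean_mono c c' : (c <= c' <= K)%nat -> trunc_mean p V K c <= trunc_mean p V K c'.
Proof.
  intros H. replace c' with (c + (c' - c))%nat by lia.
  assert (Hd : (c + (c' - c) <= K)%nat) by lia. revert Hd.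
  generalize (c' - c)%nat. intros d. induction d as [|d IH]; intros Hd.
  - rewrite Nat.add_0_r. lra.
  - rewrite Nat.add_succ_r. eapply Rle_trans; [apply IH; lia|].
    apply trunc_mean_le_succ. lia.
Qed.

End TruncMeanMonotone.

Lemma conv_nonneg p q : (forall i, 0 <= p i) -> (forall i, 0 <= q i) -> forall k, 0 <= conv p q k.
Proof. intros Hp Hq k. apply rsum_nonneg. intros. apply Rmult_le_pos; auto. Qed.

Lemma upd_same Q n m x : upd Q n m x n m = x.
Proof. unfold upd. rewrite !Nat.eqb_refl. reflexivity. Qed.

Lemma upd_other Q n m x i j : (i <> n \/ j <> m) -> upd Q n m x i j = Q i j.
Proof.
  intros H. unfold upd.
  destruct (Nat.eqb_spec i n), (Nat.eqb_spec j m); simpl; auto; lia.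
Qed.

Lemma upd_id Q n m : upd Q n m (Q n m) = Q.
Proof.
  apply functional_extensionality; intros i; apply functional_extensionality; intros j.
  unfold upd. destruct (Nat.eqb_spec i n), (Nat.eqb_spec j m); subst; reflexivity.
Qed.

Lemma upd_comm Q n m x n' m' y : (n <> n' \/ m <> m') ->
  upd (upd Q n m x) n' m' y = upd (upd Q n' m' y) n m x.
Proof.
  intros H. apply functional_extensionality; intros i; apply functional_extensionality; intros j.
  unfold upd. destruct (Nat.eqb_spec i n), (Nat.eqb_spec j m),
    (Nat.eqb_spec i n'), (Nat.eqb_spec j m'); subst; simpl; auto; lia.
Qed.

Lemma served_at u n m : u n = m -> served u n m = true.
Proof.
  intros H. unfold served. destruct (Nat.eqb_spec n 0) as [->|Hn].
  - rewrite H, Nat.eqb_refl. reflexivity.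
  - rewrite H, Nat.eqb_refl, Bool.orb_true_r. reflexivity.
Qed.

Lemma served_by_MBS u n m : u O = m -> served u n m = true.
Proof. intros H. unfold served. rewrite H, Nat.eqb_refl. reflexivity. Qed.

Lemma decP_spec P : decP P = true <-> P.
Proof. unfold decP. destruct excluded_middle_informative; split; auto; discriminate. Qed.

Lemma find_max_some P k x : find_max P k = Some x -> P x.
Proof.
  induction k as [|k IH]; simpl; destruct (decP _) eqn:E; intros H;
    try discriminate; try (inversion H; subst; apply decP_spec; exact E).
  apply IH, H.
Qed.

Lemma find_min_aux_spec P f i :
  match find_min_aux P i f with
  | Some x => P x /\ (x < i + f)%nat /\ (forall z, (i <= z < x)%nat -> ~ P z)
  | None => forall z, (i <= z < i + f)%nat -> ~ P z
  end.
Proof.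
  revert i. induction f as [|f IH]; intros i; simpl; [intros; lia|].
  destruct (decP (P i)) eqn:E.
  - split; [apply decP_spec; exact E | split; intros; lia].
  - assert (Hi : ~ P i) by (intros Hp; apply decP_spec in Hp; congruence).
    specialize (IH (S i)). destruct (find_min_aux P (S i) f) as [x|].
    + destruct IH as (Px & Hx & Hlt). split; [exact Px|]. split; [lia|].
      intros z Hz. destruct (Nat.eq_dec z i); [subst; exact Hi | apply Hlt; lia].
    + intros z Hz. destruct (Nat.eq_dec z i); [subst; exact Hi | apply IH; lia].
Qed.

Lemma find_min_some P k x : find_min P k = Some x -> P x.
Proof.
  unfold find_min. pose proof (find_min_aux_spec P (S k) 0) as Hs.
  intros E. rewrite E in Hs. apply Hs.
Qed.

Lemma find_min_weaken (P P' : nat -> Prop) k : (forall z, (z <= k)%nat -> P z -> P' z) ->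
  le_pinf (find_min P' k) (find_min P k).
Proof.
  intros H. unfold find_min.
  pose proof (find_min_aux_spec P (S k) 0) as A.
  pose proof (find_min_aux_spec P' (S k) 0) as B.
  destruct (find_min_aux P 0 (S k)) as [a|], (find_min_aux P' 0 (S k)) as [b|];
    simpl; auto.
  - destruct A as (Pa & Ha & _), B as (_ & _ & Hb).
    destruct (Nat.le_gt_cases b a) as [|Hab]; [assumption|].
    exfalso. apply (Hb a); [lia | apply H; [lia | exact Pa]].
  - destruct A as (Pa & Ha & _). apply (B a); [lia | apply H; [lia | exact Pa]].
Qed.

Section Model.
Variable Mdl : Model.

Lemma Emu_le mu f g : Forall (fun p => 0 <= fst p) mu -> (forall u, f u <= g u) ->
  Emu mu f <= Emu mu g.
Proof.
  intros Hmu H. induction Hmu as [|a mu Ha _ IH]; unfold Emu; simpl; [lra|].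
  fold (Emu mu f) (Emu mu g).
  pose proof (Rmult_le_compat_l _ _ _ Ha (H (snd a))). lra.
Qed.

Lemma rsum_Emu mu N (t : (nat -> nat) -> nat -> R) W :
  rsum N (fun q' => Emu mu (fun u => t u q') * W q') =
  Emu mu (fun u => rsum N (fun q' => t u q' * W q')).
Proof.
  induction mu as [|a mu IH]; unfold Emu in *; simpl.
  - induction N as [|N IHN]; simpl; [reflexivity|]. rewrite IHN. ring.
  - rewrite <- IH, <- rsum_scal, <- rsum_plus. apply rsum_ext. intros. ring.
Qed.

Lemma arrlaw_nonneg n m : (n <= NB Mdl)%nat -> cache Mdl n m = true ->
  forall i, 0 <= arrlaw Mdl n m i.
Proof.
  intros Hn Hc. pose proof (cache_range Mdl n m Hc) as Hm.
  unfold arrlaw. destruct (Nat.eqb n 0); [|intros; apply arr_nonneg; auto].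
  unfold tildeA.
  assert (Hseq : forall n', In n' (seq 1 (NB Mdl)) -> (n' <= NB Mdl)%nat)
    by (intros n' Hin; apply in_seq in Hin; lia).
  assert (H0 : forall i, 0 <= arr Mdl 0 m i) by (intros; apply arr_nonneg; auto; lia).
  revert H0 Hseq. generalize (arr Mdl 0 m) (seq 1 (NB Mdl)).
  intros acc l Hacc Hl. revert acc Hacc.
  induction l as [|a l IH]; intros acc Hacc; simpl; [exact Hacc|].
  apply IH; [intros; apply Hl; right; assumption|].
  destruct (cache Mdl a m); [exact Hacc|].
  apply conv_nonneg; [exact Hacc|]. intros; apply arr_nonneg; [apply Hl; left|]; auto.
Qed.

Definition next_value (V : nat -> nat -> nat -> R) n m q u : R :=
  rsum (S (cap Mdl n m)) (fun q' => trP Mdl n m q u q' * V n m q').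

Lemma next_value_trunc_mean V n m q u :
  next_value V n m q u =
  trunc_mean (arrlaw Mdl n m) (V n m) (cap Mdl n m) (if served u n m then O else q).
Proof. reflexivity. Qed.

Definition nondecreasing_values (V : nat -> nat -> nat -> R) : Prop :=
  forall n m, (n <= NB Mdl)%nat -> cache Mdl n m = true ->
  forall a b, (a <= b <= cap Mdl n m)%nat -> V n m a <= V n m b.

Lemma next_value_mono V n m u a b : nondecreasing_values V ->
  (n <= NB Mdl)%nat -> cache Mdl n m = true -> (a <= b <= cap Mdl n m)%nat ->
  next_value V n m a u <= next_value V n m b u.
Proof.
  intros HV Hn Hc Hab. rewrite !next_value_trunc_mean.
  apply trunc_mean_mono; [apply arrlaw_nonneg | apply HV | destruct (served u n m)]; auto; lia.
Qed.

Lemma next_value_served V n m u a b : served u n m = true ->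
  next_value V n m a u = next_value V n m b u.
Proof. intros H. rewrite !next_value_trunc_mean, H. reflexivity. Qed.

Lemma Vit_nondecreasing mu Qdag : Forall (fun p => 0 <= fst p) mu ->
  forall l, nondecreasing_values (Vit Mdl mu Qdag l).
Proof.
  intros Hmu l. induction l as [|l IH]; intros n m Hn Hc a b Hab; simpl; [lra|].
  enough (Jnext Mdl mu (Vit Mdl mu Qdag l) n m a <= Jnext Mdl mu (Vit Mdl mu Qdag l) n m b)
    by lra.
  unfold Jnext. rewrite !(rsum_Emu mu _ (fun u q' => trP Mdl n m _ u q')).
  apply Rplus_le_compat; apply Emu_le; auto; intros u.
  - unfold gnm. pose proof (le_INR a b ltac:(lia)). lra.
  - apply (next_value_mono (Vit Mdl mu Qdag l)); auto.
Qed.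

Lemma limit_nondecreasing mu Qdag Vhat : Forall (fun p => 0 <= fst p) mu ->
  (forall n m q, (n <= NB Mdl)%nat -> cache Mdl n m = true -> (q <= cap Mdl n m)%nat ->
     Un_cv (fun l => Vit Mdl mu Qdag l n m q) (Vhat n m q)) ->
  nondecreasing_values Vhat.
Proof.
  intros Hmu Hcv n m Hn Hc a b Hab.
  apply (@Rle_cv_lim (fun l => Vit Mdl mu Qdag l n m a) (fun l => Vit Mdl mu Qdag l n m b)).
  - intros l. apply (Vit_nondecreasing mu Qdag Hmu l n m); auto.
  - apply Hcv; auto; lia.
  - apply Hcv; auto; lia.
Qed.

Lemma sumDom_update (f g : nat -> nat -> R) n m :
  (n <= NB Mdl)%nat -> cache Mdl n m = true ->
  (forall i j, (i <> n \/ j <> m) -> g i j = f i j) ->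
  sumDom Mdl g = sumDom Mdl f + (g n m - f n m).
Proof.
  intros Hn Hc H. pose proof (cache_range Mdl n m Hc). unfold sumDom.
  rewrite (rsum_update _ (fun i => rsum (S (MC Mdl)) (fun j => if cache Mdl i j then f i j else 0)) _ n)
    by (lia || (intros i Hi; apply rsum_ext; intros j _; rewrite H; auto)).
  rewrite (rsum_update _ (fun j => if cache Mdl n j then f n j else 0)
                         (fun j => if cache Mdl n j then g n j else 0) m)
    by (lia || (intros j Hj; rewrite H; auto)).
  rewrite Hc. ring.
Qed.

Lemma Deltahat_upd V Q u v n m a b : (n <= NB Mdl)%nat -> cache Mdl n m = true ->
  Deltahat Mdl V u v (upd Q n m b) =
  Deltahat Mdl V u v (upd Q n m a)
  + (next_value V n m b u - next_value V n m a u)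
  - (next_value V n m b v - next_value V n m a v).
Proof.
  intros Hn Hc.
  assert (HJ : forall w, Jhat Mdl V (upd Q n m b) w =
    Jhat Mdl V (upd Q n m a) w + (INR b - INR a)
    + (next_value V n m b w - next_value V n m a w)).
  { intros w. unfold Jhat, gcost, dQ.
    rewrite (sumDom_update (fun i j => INR (upd Q n m a i j)) (fun i j => INR (upd Q n m b i j))
               n m Hn Hc) by (intros; rewrite !upd_other; auto).
    rewrite (sumDom_update
      (fun i j => rsum (S (cap Mdl i j)) (fun q' => trP Mdl i j (upd Q n m a i j) w q' * V i j q'))
      (fun i j => rsum (S (cap Mdl i j)) (fun q' => trP Mdl i j (upd Q n m b i j) w q' * V i j q'))
      n m Hn Hc) by (intros; rewrite !upd_other; auto).
    rewrite !upd_same. unfold next_value. ring. }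
  unfold Deltahat. rewrite !HJ. ring.
Qed.

Lemma Deltahat_antisym V u v Q : Deltahat Mdl V u v Q = - Deltahat Mdl V v u Q.
Proof. unfold Deltahat. ring. Qed.

Lemma inU_nonzero v : inU Mdl v -> v <> zero_action ->
  exists n, (n <= NB Mdl)%nat /\ cache Mdl n (v n) = true.
Proof.
  intros (Hv & Hout & _) Hne. apply NNPP. intros Hno. apply Hne.
  apply functional_extensionality. intros k. unfold zero_action.
  destruct (le_lt_dec k (NB Mdl)) as [Hk|Hk]; [|apply Hout; exact Hk].
  destruct (Hv k Hk) as [|Hc]; [assumption|]. exfalso. apply Hno. eauto.
Qed.

Section Optimality.
Variable Vhat : nat -> nat -> nat -> R.
Hypothesis Vhat_nondecreasing : nondecreasing_values Vhat.

Lemma Deltahat_served_antitone u v Q n m a b :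
  (n <= NB Mdl)%nat -> cache Mdl n m = true -> served u n m = true ->
  (a <= b <= cap Mdl n m)%nat ->
  Deltahat Mdl Vhat u v (upd Q n m b) <= Deltahat Mdl Vhat u v (upd Q n m a).
Proof.
  intros Hn Hc Hs Hab.
  rewrite (Deltahat_upd Vhat Q u v n m a b Hn Hc), (next_value_served Vhat n m u b a Hs).
  pose proof (next_value_mono Vhat n m v a b Vhat_nondecreasing Hn Hc Hab). lra.
Qed.

Lemma zero_action_optimal Q :
  (forall n m, (n <= NB Mdl)%nat -> cache Mdl n m = true ->
     le_ninf (Q n m) (phi_plus Mdl Vhat zero_action Q n m)) ->
  forall v, inU Mdl v -> Deltahat Mdl Vhat zero_action v Q <= 0.
Proof.
  intros Hphi v Hv.
  destruct (classic (v = zero_action)) as [->|Hne]; [unfold Deltahat; lra|].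
  destruct (inU_nonzero v Hv Hne) as (n & Hn & Hc).
  specialize (Hphi n (v n) Hn Hc). unfold le_ninf, phi_plus in Hphi.
  destruct (find_max _ _) as [x|] eqn:Hx; [|contradiction].
  destruct (find_max_some _ _ _ Hx) as [Hxcap HPhi].
  specialize (HPhi v Hv Hne).
  (* v serves the coordinate (n, v n), so Delta_{v,0} can only decrease from Q to x. *)
  pose proof (Deltahat_served_antitone v zero_action Q n (v n) (Q n (v n)) x Hn Hc
                (served_at v n (v n) eq_refl) (conj Hphi Hxcap)) as Hmono.
  rewrite upd_id in Hmono.
  rewrite Deltahat_antisym in HPhi |- *. lra.
Qed.

Lemma served_action_optimal u n m Q : (n <= NB Mdl)%nat -> cache Mdl n m = true ->
  u n = m -> validQ Mdl Q -> ge_pinf (Q n m) (phi_minus Mdl Vhat u Q n m) ->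
  forall v, inU Mdl v -> Deltahat Mdl Vhat u v Q <= 0.
Proof.
  intros Hn Hc Hun HQ Hphi v Hv.
  destruct (classic (v = u)) as [->|Hne]; [unfold Deltahat; lra|].
  unfold ge_pinf, phi_minus in Hphi.
  destruct (find_min _ _) as [x|] eqn:Hx; [|contradiction].
  destruct (find_min_some _ _ _ Hx) as [_ HPhi].
  rewrite <- (upd_id Q n m). eapply Rle_trans; [|apply (HPhi v Hv Hne)].
  apply Deltahat_served_antitone; auto using served_at.
Qed.

Lemma phi_minus_MBS_antitone u m n Q x y : u O = m ->
  (1 <= n <= NB Mdl)%nat -> cache Mdl n m = true -> (x <= y <= cap Mdl n m)%nat ->
  le_pinf (phi_minus Mdl Vhat u (upd Q n m y) O m) (phi_minus Mdl Vhat u (upd Q n m x) O m).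
Proof.
  intros Hu Hn Hc Hxy. apply find_min_weaken. intros z _ [Hz HPhi]. split; [exact Hz|].
  intros v Hv Hne. specialize (HPhi v Hv Hne).
  rewrite upd_comm in HPhi by lia. rewrite upd_comm by lia.
  eapply Rle_trans; [|exact HPhi].
  apply Deltahat_served_antitone; auto using served_by_MBS; lia.
Qed.

End Optimality.

End Model.

Theorem theorem2 (Mdl : Model) (mu : list (R * (nat -> nat)))
  (Hmu : is_base_policy Mdl mu)
  (Qdag : nat -> nat -> nat) (HQdag : validQ Mdl Qdag)
  (Vhat : nat -> nat -> nat -> R)
  (Hconv : forall n m q, (n <= NB Mdl)%nat -> cache Mdl n m = true ->
             (q <= cap Mdl n m)%nat ->
             Un_cv (fun l => Vit Mdl mu Qdag l n m q) (Vhat n m q)) :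
  (forall Q, validQ Mdl Q ->
     (forall n m, (n <= NB Mdl)%nat -> cache Mdl n m = true ->
        le_ninf (Q n m) (phi_plus Mdl Vhat (zero_action) Q n m)) ->
     forall v, inU Mdl v ->
       Deltahat Mdl Vhat zero_action v Q <= 0 /\
       Jhat Mdl Vhat Q zero_action <= Jhat Mdl Vhat Q v)
  /\
  (forall u n m, inU Mdl u -> (n <= NB Mdl)%nat -> cache Mdl n m = true -> u n = m ->
     forall Q, validQ Mdl Q ->
       ge_pinf (Q n m) (phi_minus Mdl Vhat u Q n m) ->
       forall v, inU Mdl v ->
         Deltahat Mdl Vhat u v Q <= 0 /\ Jhat Mdl Vhat Q u <= Jhat Mdl Vhat Q v)
  /\
  (forall u m, inU Mdl u -> cache Mdl O m = true -> u O = m ->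
     forall n, (1 <= n <= NB Mdl)%nat -> cache Mdl n m = true ->
     forall Q, validQ Mdl Q ->
     forall x y, (x <= y)%nat -> (y <= cap Mdl n m)%nat ->
       le_pinf (phi_minus Mdl Vhat u (upd Q n m y) O m)
               (phi_minus Mdl Vhat u (upd Q n m x) O m)).
Proof.
  destruct Hmu as [Hweights _].
  assert (HV : nondecreasing_values Mdl Vhat).
  { apply (limit_nondecreasing Mdl mu Qdag); [|exact Hconv].
    eapply Forall_impl; [|exact Hweights]. intros a [Ha _]. exact Ha. }
  split; [|split].
  - intros Q HQ Hphi v Hv.
    pose proof (zero_action_optimal Mdl Vhat HV Q Hphi v Hv) as D.
    unfold Deltahat in D |- *. lra.
  - intros u n m _ Hn Hc Hun Q HQ Hphi v Hv.
    pose proof (served_action_optimal Mdl Vhat HV u n m Q Hn Hc Hun HQ Hphi v Hv) as D.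
    unfold Deltahat in D |- *. lra.
  - intros u m _ _ Hu n Hn Hc Q _ x y Hxy Hy.
    apply (phi_minus_MBS_antitone Mdl Vhat HV); auto.
Qed.
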